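(* Let $j$ be a positive integer and $a$ an indeterminate (independent of $x$). Write $G(x)=\prod_{i=0}^{j-1}\frac{1+ax^2}{1+ix}=\sum_{N\ge0}G_Nx^N$ and $H(x)=\prod_{i=1-j}^{-1}\frac{1+ix}{1+ax^2}=\sum_{N\ge0}H_Nx^N$. Then for every $N\ge0$, \[G_N=\sum_{m=0}^{[N/2]}\binom{j}{m}Q_{N-2m}(j)\,a^m,\qquad H_N=\sum_{m=0}^{[N/2]}(-1)^N\binom{1-j}{m}\sigma_{N-2m}(j)\,a^m.\]
   Context: $\sigma_0(j)=1$, $\sigma_i(j)=\sum_{1\le n_1<\cdots<n_i\le j-1}n_1n_2\cdots n_i$ for $1\le i\le j-1$, $\sigma_i(j)=0$ for $i\ge j$; $Q_0(j)=1$, $Q_k(j)=-\sum_{i=1}^k\sigma_i(j)Q_{k-i}(j)$ for $k\ge1$. $\binom{\alpha}{m}=\alpha(\alpha-1)\cdots(\alpha-m+1)/m!$ is the generalized binomial coefficient, and $[x]$ is the integer part. *)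

From HB Require Import structures.
From mathcomp Require Import all_boot all_order all_algebra.
Set Implicit Arguments. Unset Strict Implicit. Unset Printing Implicit Defensive.
Import Order.TTheory GRing.Theory Num.Theory.
Local Open Scope ring_scope.

(* sigma_i(j) = sum_{1 <= n_1 < ... < n_i <= j-1} n_1 ... n_i, i.e. the sum over
   i-element subsets S of {1,...,j-1} of prod_{n in S} n.
   (sigma_0(j) = 1 via the empty set; sigma_i(j) = 0 for i >= j.) *)
Definition sigma (i j : nat) : rat :=
  \sum_(S : {set 'I_j} | (#|S| == i) && [forall n in S, (0 < (n : nat))%N])
     \prod_(n in S) (n : nat)%:R.

(* Q_0(j) = 1, Q_k(j) = - sum_{i=1}^k sigma_i(j) Q_{k-i}(j); Qseq k j = [:: Q_0; ...; Q_k]. *)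
Fixpoint Qseq (k j : nat) : seq rat :=
  match k with
  | 0 => [:: 1]
  | k'.+1 => rcons (Qseq k' j)
      (- \sum_(i < k'.+1) sigma i.+1 j * nth 0 (Qseq k' j) (k' - i)%N)
  end.
Definition Q (k j : nat) : rat := nth 0 (Qseq k j) k.

Definition gbinom (alpha : rat) (m : nat) : rat :=
  (\prod_(k < m) (alpha - k%:R)) / (m`!)%:R.

(* formal power series over a commutative ring, as coefficient sequences *)
Definition psmul (R : comRingType) (f g : nat -> R) : nat -> R :=
  fun n => \sum_(k < n.+1) f k * g (n - k)%N.
Definition psone (R : comRingType) : nat -> R := fun n => (n == 0%N)%:R.
Definition psprod (R : comRingType) (s : seq (nat -> R)) : nat -> R :=
  foldr (@psmul R) (@psone R) s.
Definition poly_ps (R : comRingType) (p : {poly R}) : nat -> R := fun n => p`_n.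
(* expansion of 1/(1 + c x) *)
Definition inv_lin (R : comRingType) (c : R) : nat -> R := fun n => (- c) ^+ n.
(* expansion of 1/(1 + a x^2) *)
Definition inv_quad (R : comRingType) (a : R) : nat -> R :=
  fun n => if odd n then 0 else (- a) ^+ n./2.

Definition Gser (R : comRingType) (a : R) (j : nat) : nat -> R :=
  psprod [seq psmul (poly_ps (1 + a *: 'X^2)) (inv_lin (i%:R : R)) | i <- iota 0 j].
(* H(x) = prod_{i=1-j}^{-1} (1 + i x)/(1 + a x^2); i = -k for k = 1..j-1 *)
Definition Hser (R : comRingType) (a : R) (j : nat) : nat -> R :=
  psprod [seq psmul (poly_ps (1 + (- (k%:R : R)) *: 'X)) (inv_quad a)
         | k <- iota 1 j.-1].

(* Both series are a polynomial times the inverse of a polynomial.  The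
   coefficients of prod_(i<j) (1 + i x) are the sigma_n(j), so the recursion
   defining Q says that sum_n Q_n(j) x^n is its inverse; likewise
   prod_(k=1)^(j-1) (1 - k x) has coefficients (-1)^n sigma_n(j).  The factors
   (1 + a x^2)^j and (1 + a x^2)^(-(j-1)) are even series with coefficients
   binom(j, m) a^m and binom(1-j, m) a^m, both by Pascal's rule, and the N-th
   coefficient of an even series times another series is a sum over m <= N/2.
   All of this holds for any element a of any commutative Q-algebra; the
   theorem is the case a = 'X in Q[a].  Formal power series are coefficient
   functions, and their ring laws are inherited from polynomials by truncation. *)

From HB Require Import structures.
From mathcomp Require Import all_boot all_order all_algebra.
From mathcomp Require Import ring.
From Stdlib Require Import FunctionalExtensionality.
Set Implicit Arguments. Unset Strict Implicit. Unset Printing Implicit Defensive.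
Import Order.TTheory GRing.Theory Num.Theory.
Local Open Scope ring_scope.

Lemma big_ord_even (V : nmodType) (F : nat -> V) N :
  (forall k, odd k -> F k = 0) ->
  \sum_(k < N.+1) F k = \sum_(m < N./2.+1) F m.*2.
Proof.
move=> F_odd; elim: N => [|N IHN]; first by rewrite !big_ord_recl !big_ord0.
rewrite big_ord_recr IHN /= uphalf_half.
move: (odd_double_half N); case odd_N: (odd N) => /= N_eq.
  have -> : N.+1 = (N./2).+1.*2 by rewrite doubleS -[in LHS]N_eq.
  by rewrite add1n [in RHS]big_ord_recr.
by rewrite add0n F_odd ?addr0 //= odd_N.
Qed.

Section PowerSeries.
Variable R : comNzRingType.
Implicit Types (f g h : nat -> R) (p : {poly R}).

Definition ps_trunc (n : nat) f : {poly R} := \poly_(i < n.+1) f i.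

Lemma coef_ps_trunc n f i : (i <= n)%N -> (ps_trunc n f)`_i = f i.
Proof. by move=> le_in; rewrite coef_poly ltnS le_in. Qed.

Lemma psmul_trunc n f g m :
  (m <= n)%N -> psmul f g m = (ps_trunc n f * ps_trunc n g)`_m.
Proof.
move=> le_mn; rewrite coefM; apply: eq_bigr => i _.
have le_in : (i <= n)%N by apply: leq_trans le_mn; rewrite -ltnS.
by rewrite !coef_ps_trunc // (leq_trans (leq_subr _ _) le_mn).
Qed.

Lemma psmulC f g : psmul f g = psmul g f.
Proof.
by apply: functional_extensionality => n; rewrite !(psmul_trunc _ _ (leqnn n)) mulrC.
Qed.

Lemma psmulA f g h : psmul f (psmul g h) = psmul (psmul f g) h.
Proof.
apply: functional_extensionality => n.
have -> : psmul (psmul f g) h n = (ps_trunc n f * ps_trunc n g * ps_trunc n h)`_n.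
  rewrite coefM; apply: eq_bigr => i _; have le_in : (i <= n)%N by rewrite -ltnS.
  by rewrite (psmul_trunc _ _ le_in) coef_ps_trunc ?leq_subr.
rewrite -mulrA coefM; apply: eq_bigr => i _; have le_in : (i <= n)%N by rewrite -ltnS.
by rewrite (psmul_trunc _ _ (leq_subr i n)) coef_ps_trunc.
Qed.

Lemma psmul1l f : psmul (@psone R) f = f.
Proof.
apply: functional_extensionality => n.
rewrite /psmul big_ord_recl /psone eqxx mul1r subn0 big1 ?addr0 // => i _.
by rewrite mul0r.
Qed.

Lemma psmul1r f : psmul f (@psone R) = f.
Proof. by rewrite psmulC psmul1l. Qed.

Lemma poly_psM p q : poly_ps (p * q) = psmul (poly_ps p) (poly_ps q).
Proof. by apply: functional_extensionality => n; rewrite /poly_ps coefM. Qed.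

Lemma poly_ps1 : poly_ps 1 = @psone R.
Proof. by apply: functional_extensionality => n; rewrite /poly_ps coef1. Qed.

Lemma psprod_psmul (T : Type) (F G : T -> nat -> R) s :
  psprod [seq psmul (F x) (G x) | x <- s] =
  psmul (psprod [seq F x | x <- s]) (psprod [seq G x | x <- s]).
Proof.
elim: s => [|x s IHs] /=; first by rewrite psmul1l.
rewrite [psprod _]/= IHs -!psmulA; congr psmul.
by rewrite psmulC -!psmulA [psmul _ (G x)]psmulC.
Qed.

Lemma psprod_poly_ps (T : Type) (P : T -> {poly R}) s :
  psprod [seq poly_ps (P x) | x <- s] = poly_ps (\prod_(x <- s) P x).
Proof.
elim: s => [|x s IHs] /=; first by rewrite big_nil poly_ps1.
by rewrite big_cons poly_psM -IHs.
Qed.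

Lemma psmul_polyE p g n : psmul (poly_ps p) g n = (p * ps_trunc n g)`_n.
Proof. by rewrite coefM; apply: eq_bigr => i _; rewrite coef_ps_trunc ?leq_subr. Qed.

Lemma ps_inv_uniq p g h :
  psmul (poly_ps p) g = @psone R -> psmul (poly_ps p) h = @psone R -> g = h.
Proof.
move=> pg1 ph1.
by rewrite -[g]psmul1l -ph1 [psmul (poly_ps p) h]psmulC -psmulA pg1 psmul1r.
Qed.

Lemma psprod_inv (T : Type) (P : T -> {poly R}) (G : T -> nat -> R) s :
  (forall x, psmul (poly_ps (P x)) (G x) = @psone R) ->
  psmul (poly_ps (\prod_(x <- s) P x)) (psprod (map G s)) = @psone R.
Proof.
move=> PG1; rewrite -psprod_poly_ps -psprod_psmul.
by elim: s => [|x s IHs] //=; rewrite IHs PG1 psmul1l.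
Qed.

Lemma psmul_map (S : comNzRingType) (phi : {rmorphism R -> S}) f g :
  psmul (phi \o f) (phi \o g) = phi \o psmul f g.
Proof.
apply: functional_extensionality => n /=.
by rewrite rmorph_sum; apply: eq_bigr => i _; rewrite rmorphM.
Qed.

Lemma psone_map (S : comNzRingType) (phi : {rmorphism R -> S}) :
  phi \o @psone R = @psone S.
Proof. by apply: functional_extensionality => n /=; rewrite rmorph_nat. Qed.

Lemma psmul_linE (c : R) g n :
  psmul (poly_ps (1 + c *: 'X)) g n = g n + (if n is n'.+1 then c * g n' else 0).
Proof.
rewrite psmul_polyE mulrDl mul1r -scalerAl coefD coefZ coefXM.
by case: n => [|n]; rewrite coef_ps_trunc //= ?mulr0 // coef_ps_trunc.
Qed.

Lemma psmul_quadE (a : R) g n :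
  psmul (poly_ps (1 + a *: 'X^2)) g n =
  g n + (if n is n'.+2 then a * g n' else 0).
Proof.
rewrite psmul_polyE mulrDl mul1r -scalerAl coefD coefZ coefXnM.
by case: n => [|[|n]]; rewrite coef_ps_trunc //= ?mulr0 // subn2 coef_ps_trunc // leqW.
Qed.

Lemma inv_linP (c : R) : psmul (poly_ps (1 + c *: 'X)) (inv_lin c) = @psone R.
Proof.
apply: functional_extensionality => -[|n]; rewrite psmul_linE /inv_lin.
  by rewrite addr0.
by rewrite exprS mulNr addNr.
Qed.

Definition ps_even (u : nat -> R) : nat -> R :=
  fun n => if odd n then 0 else u n./2.

Lemma ps_even_quad (a : R) (u : nat -> R) :
  psmul (poly_ps (1 + a *: 'X^2)) (ps_even u) =
  ps_even (fun m => u m + (if m is m'.+1 then a * u m' else 0)).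
Proof.
apply: functional_extensionality => n; rewrite psmul_quadE /ps_even.
by case: n => [|[|n]] /=; rewrite ?addr0 // negbK; case: odd; rewrite ?mulr0 ?addr0.
Qed.

Lemma ps_even1 : ps_even (@psone R) = @psone R.
Proof.
apply: functional_extensionality => n; rewrite /ps_even /psone.
by case: n => [|[|n]] //=; case: odd.
Qed.

Lemma inv_quadP (a : R) : psmul (poly_ps (1 + a *: 'X^2)) (inv_quad a) = @psone R.
Proof.
change (inv_quad a) with (ps_even (fun m => (- a) ^+ m)).
rewrite ps_even_quad -[RHS]ps_even1; congr ps_even.
apply: functional_extensionality => -[|m]; first by rewrite addr0.
by rewrite exprS mulNr addNr.
Qed.

Lemma poly_ps_quad_exp (a : R) j :
  poly_ps ((1 + a *: 'X^2) ^+ j) = ps_even (fun m => 'C(j, m)%:R * a ^+ m).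
Proof.
elim: j => [|j IHj].
  rewrite expr0 poly_ps1 -ps_even1; congr ps_even.
  by apply: functional_extensionality => -[|m]; rewrite ?mul1r // mul0r.
rewrite exprS poly_psM IHj ps_even_quad; congr ps_even.
apply: functional_extensionality => -[|m]; first by rewrite addr0 !bin0.
by rewrite binS natrD !exprS; ring.
Qed.

Lemma psmul_evenE (u g : nat -> R) N :
  psmul (ps_even u) g N = \sum_(m < N./2.+1) u m * g (N - m.*2)%N.
Proof.
rewrite /psmul (@big_ord_even _ (fun k => ps_even u k * g (N - k)%N)) => [|k odd_k].
  by apply: eq_bigr => m _; rewrite /ps_even odd_double doubleK.
by rewrite /ps_even odd_k mul0r.
Qed.

End PowerSeries.

Lemma coef_prod_1addZX (R : comNzRingType) (I : finType) (F : I -> R) n :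
  (\prod_(i : I) (1 + F i *: 'X))`_n = \sum_(J : {set I} | #|J| == n) \prod_(i in J) F i.
Proof.
under eq_bigr do rewrite addrC -mul_polyC.
rewrite bigA_distr coef_sum [RHS]big_mkcond /=; apply: eq_bigr => J _.
rewrite -big_mkcond /= big_split /= prodr_const -rmorph_prod coefCM coefXn.
by rewrite eq_sym; case: eqP => _; rewrite ?mulr1 ?mulr0.
Qed.

Lemma prodr_const_iota (R : pzSemiRingType) (x : R) m n :
  \prod_(i <- iota m n) x = x ^+ n.
Proof. by have := prodr_const_nat m (m + n) x; rewrite /index_iota addKn. Qed.

Lemma sigma0 j : sigma 0 j = 1.
Proof.
rewrite /sigma (big_pred1 set0) ?big_set0 // => S /=.
rewrite cards_eq0; case: eqP => [-> | //] /=.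
by apply/forall_inP => x; rewrite in_set0.
Qed.

Lemma size_Qseq k j : size (Qseq k j) = k.+1.
Proof. by elim: k => //= k IHk; rewrite size_rcons IHk. Qed.

Lemma nth_Qseq k i j : (i <= k)%N -> nth 0 (Qseq k j) i = Q i j.
Proof.
elim: k i => [|k IHk] i; first by rewrite leqn0 => /eqP ->.
rewrite leq_eqVlt => /orP [/eqP -> // | lt_ik].
by rewrite /= nth_rcons size_Qseq lt_ik IHk.
Qed.

Lemma QS k j : Q k.+1 j = - \sum_(i < k.+1) sigma i.+1 j * Q (k - i) j.
Proof.
rewrite /Q /= nth_rcons size_Qseq ltnn eqxx; congr (- _); apply: eq_bigr => i _.
by rewrite nth_Qseq // leq_subr.
Qed.

Lemma psmul_sigma_Q j : psmul (sigma^~ j) (Q^~ j) = @psone rat.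
Proof.
apply: functional_extensionality => -[|n]; rewrite /psmul big_ord_recl sigma0 mul1r.
  by rewrite big_ord0 addr0.
rewrite subn0 QS; under [X in _ + X]eq_bigr do rewrite /= subSS.
by rewrite addNr.
Qed.

Lemma gbinom0 (al : rat) : gbinom al 0 = 1.
Proof. by rewrite /gbinom big_ord0 divr1. Qed.

Lemma gbinomS (al : rat) k :
  gbinom al k.+1 = gbinom (al - 1) k.+1 + gbinom (al - 1) k.
Proof.
rewrite /gbinom big_ord_recl big_ord_recr /= subr0 factS natrM.
set P := \prod_(i < k) (al - 1 - i%:R).
have -> : \prod_(i < k) (al - (bump 0 i)%:R) = P.
  by apply: eq_bigr => i _; rewrite /bump /= add1n -natr1; ring.
have kfact_neq0 : (k`!)%:R != 0 :> rat by rewrite pnatr_eq0 -lt0n fact_gt0.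
have kS_neq0 : (k.+1)%:R != 0 :> rat by rewrite pnatr_eq0.
rewrite -natr1 in kS_neq0 *.
by field; rewrite kfact_neq0 kS_neq0.
Qed.

Section QAlgebra.
Variable A : comAlgType rat.
Implicit Types (a c : A).

Lemma poly_ps_prod_lin c j :
  poly_ps (\prod_(i <- iota 0 j) (1 + (c * i%:R) *: 'X) : {poly A}) =
  fun n => c ^+ n * (sigma n j)%:A.
Proof.
apply: functional_extensionality => n; rewrite /poly_ps.
have -> : iota 0 j = index_iota 0 j by rewrite /index_iota subn0.
rewrite big_mkord coef_prod_1addZX /sigma -in_algE rmorph_sum mulr_sumr.
rewrite (bigID (fun J : {set 'I_j} => [forall i in J, (0 < (i : nat))%N])) /=.
rewrite [X in _ + X]big1 ?addr0 => [|J /andP [_ /forall_inPn [i iJ]]].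
  apply: eq_bigr => J /andP [/eqP cardJ _].
  rewrite big_split /= prodr_const cardJ -in_algE rmorph_prod.
  by congr (_ * _); apply: eq_bigr => i _; rewrite rmorph_nat.
by rewrite -eqn0Ngt => /eqP i0; rewrite (bigD1 i) //= i0 mulr0 mul0r.
Qed.

Lemma psmul_prod_lin_Q j :
  psmul (poly_ps (\prod_(i <- iota 0 j) (1 + i%:R *: 'X) : {poly A}))
        (fun n => (Q n j)%:A) = @psone A.
Proof.
have -> : \prod_(i <- iota 0 j) (1 + i%:R *: 'X) =
          \prod_(i <- iota 0 j) (1 + (1 * i%:R) *: 'X) :> {poly A}.
  by under [RHS]eq_bigr do rewrite mul1r.
have -> : poly_ps (\prod_(i <- iota 0 j) (1 + (1 * i%:R) *: 'X)) = in_alg A \o sigma^~ j.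
  by rewrite poly_ps_prod_lin; apply: functional_extensionality => n; rewrite expr1n mul1r.
by rewrite -[RHS](psone_map (in_alg A)) -(psmul_sigma_Q j) -psmul_map.
Qed.

Lemma Gser_psmul a j :
  Gser a j = psmul (poly_ps ((1 + a *: 'X^2) ^+ j)) (fun n => (Q n j)%:A).
Proof.
rewrite /Gser psprod_psmul psprod_poly_ps prodr_const_iota; congr psmul.
apply: (@ps_inv_uniq _ (\prod_(i <- iota 0 j) (1 + i%:R *: 'X))).
  by apply: psprod_inv => i; apply: inv_linP.
exact: psmul_prod_lin_Q.
Qed.

Definition inv_quad_exp a (m : nat) : nat -> A :=
  ps_even (fun k => (gbinom (- m%:R) k)%:A * a ^+ k).

Lemma inv_quad_expP a m :
  psmul (poly_ps ((1 + a *: 'X^2) ^+ m)) (inv_quad_exp a m) = @psone A.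
Proof.
elim: m => [|m IHm].
  rewrite expr0 poly_ps1 psmul1l -ps_even1; congr ps_even.
  apply: functional_extensionality => -[|k]; first by rewrite gbinom0 scale1r expr0 mulr1.
  by rewrite /gbinom big_ord_recl /= !mulr0n oppr0 subr0 !mul0r scale0r mul0r.
rewrite exprSr poly_psM -psmulA -[RHS]IHm; congr psmul.
rewrite ps_even_quad; congr ps_even; apply: functional_extensionality => -[|k].
  by rewrite !gbinom0 addr0.
have -> : - m%:R = - m.+1%:R + 1 :> rat by rewrite -natr1; ring.
rewrite [in RHS]gbinomS addrK scalerDl mulrDl; congr (_ + _).
by rewrite exprS mulrCA.
Qed.

Lemma Hser_psmul a j :
  Hser a j = psmul (poly_ps (\prod_(k <- iota 1 j.-1) (1 + (- k%:R) *: 'X)))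
                   (inv_quad_exp a j.-1).
Proof.
rewrite /Hser psprod_psmul psprod_poly_ps; congr psmul.
apply: (@ps_inv_uniq _ ((1 + a *: 'X^2) ^+ j.-1)); last exact: inv_quad_expP.
by rewrite -(prodr_const_iota _ 1); apply: psprod_inv => _; apply: inv_quadP.
Qed.

Lemma poly_ps_prod_neg j : (0 < j)%N ->
  poly_ps (\prod_(k <- iota 1 j.-1) (1 + (- k%:R) *: 'X) : {poly A}) =
  fun n => (-1) ^+ n * (sigma n j)%:A.
Proof.
case: j => // j _; rewrite -(poly_ps_prod_lin (-1)) /= big_cons mulr0 scale0r addr0 mul1r.
by congr poly_ps; apply: eq_bigr => k _; rewrite mulN1r.
Qed.

Lemma Gser_coef a j N :
  Gser a j N = \sum_(m < N./2.+1) ('C(j, m)%:R * Q (N - 2 * m) j)%:A * a ^+ m.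
Proof.
rewrite Gser_psmul poly_ps_quad_exp psmul_evenE; apply: eq_bigr => m _.
by rewrite -mul2n -!in_algE rmorphM rmorph_nat mulrAC.
Qed.

Lemma Hser_coef a j N : (0 < j)%N ->
  Hser a j N = \sum_(m < N./2.+1)
    ((-1) ^+ N * gbinom (1 - j%:R) m * sigma (N - 2 * m) j)%:A * a ^+ m.
Proof.
move=> j_gt0; rewrite Hser_psmul psmulC psmul_evenE poly_ps_prod_neg //.
apply: eq_bigr => m /= lt_m_half.
have le_2m_N : (m.*2 <= N)%N by rewrite -geq_half_double -ltnS.
have -> : (-1) ^+ (N - m.*2) = (-1) ^+ N :> A.
  by rewrite -signr_odd oddB // odd_double addbF signr_odd.
have -> : - (j.-1)%:R = 1 - j%:R :> rat by case: j j_gt0 => // j _; rewrite -natr1; ring.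
by rewrite -mul2n -!in_algE !rmorphM rmorphXn rmorphN1; ring.
Qed.

End QAlgebra.

Theorem lemma2p3 (j : nat) (hj : (0 < j)%N) (N : nat) :
  Gser ('X : {poly rat}) j N =
    \sum_(m < N./2.+1) ((('C(j, m))%:R * Q (N - 2 * m) j)%:P * 'X ^+ m)
  /\
  Hser ('X : {poly rat}) j N =
    \sum_(m < N./2.+1)
      (((-1) ^+ N * gbinom (1 - j%:R) m * sigma (N - 2 * m) j)%:P * 'X ^+ m).
Proof.
by split; [rewrite Gser_coef | rewrite Hser_coef //]; under eq_bigr do rewrite alg_polyC.
Qed.
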